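(* Let $f\in C^1([0,1])$ satisfy $f(0)=f(1)=0$, $f(u)>0$ for $u\in(0,1)$, $f'(0)>0$, $f(u)\leqslant f'(0)u$ for $u\in(0,1)$. For $\alpha\in\mathbb R$ and $\sigma>0$ let \[ k(x)=\frac{1}{\sqrt{2\pi\sigma}}\exp\Big(-\frac{(x-\alpha)^2}{2\sigma}\Big),\qquad r=\frac{\alpha}{\sqrt{2\sigma}}, \] and let $c_l^*,c_r^*$ be as in the context. If $f'(0)\geqslant1$, then $c_l^*<0<c_r^*$. If $f'(0)<1$, there exists a constant $r^*>0$ (depending only on $f'(0)$) such that: (i) if $r>r^*$, then $0<c_l^*<c_r^*$; (ii) if $r=r^*$, then $0=c_l^*<c_r^*$; (iii) if $-r^*<r<r^*$, then $c_l^*<0<c_r^*$; (iv) if $r=-r^*$, then $c_l^*<c_r^*=0$; (v) if $r<-r^*$, then $c_l^*<c_r^*<0$.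
   Context: $c_l^*=\sup_{\lambda<0}\{\lambda^{-1}[\int_{\mathbb R}k(x)e^{\lambda x}dx-1+f'(0)]\}$ and $c_r^*=\inf_{\lambda>0}\{\lambda^{-1}[\int_{\mathbb R}k(x)e^{\lambda x}dx-1+f'(0)]\}$ are the spreading speeds to the left and right of $u_t=\int_{\mathbb R}k(x-y)u(t,y)dy-u+f(u)$. *)

From Stdlib Require Import Reals Lra.
From Coquelicot Require Import Coquelicot.
Open Scope R_scope.

Definition C1_on_01 (f fp : R -> R) : Prop :=
  (forall x, 0 <= x <= 1 ->
     filterlim (fun y => (f y - f x) / (y - x))
       (within (fun y => 0 <= y <= 1 /\ y <> x) (locally x)) (locally (fp x)))
  /\
  (forall x, 0 <= x <= 1 ->
     filterlim fp (within (fun y => 0 <= y <= 1) (locally x)) (locally (fp x))).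

Definition gauss_kernel (alpha sigma : R) (x : R) : R :=
  / sqrt (2 * PI * sigma) * exp (- (x - alpha) ^ 2 / (2 * sigma)).

Definition laplace_k (k : R -> R) (lam : R) : R :=
  RInt_gen (fun x => k x * exp (lam * x))
    (Rbar_locally m_infty) (Rbar_locally p_infty).

Definition c_left (k : R -> R) (d : R) : Rbar :=
  Lub_Rbar (fun y => exists lam, lam < 0 /\ y = (laplace_k k lam - 1 + d) / lam).

Definition c_right (k : R -> R) (d : R) : Rbar :=
  Glb_Rbar (fun y => exists lam, 0 < lam /\ y = (laplace_k k lam - 1 + d) / lam).

(* The Laplace transform of the Gaussian kernel is explicit,
   [int k(x) e^(lam x) dx = exp (alpha lam + sigma lam^2 / 2)], so
   [G lam = int k(x) e^(lam x) dx - 1 + f'(0)] is known in closed form. Its minimum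
   [m0 = exp (- r^2) - 1 + f'(0)] is attained at [lam = - alpha / sigma], and [m0 > 0]
   exactly when [f'(0) >= 1] or [|r| < r* = sqrt (- ln (1 - f'(0)))].
   If [m0 > 0], [G] dominates a positive multiple of [|lam|], so [c_l < 0 < c_r];
   if [m0 <= 0], the value [m0 / lam] at the vertex, which lies on the side of
   [- alpha], gives the remaining signs. Reflecting [x] to [- x] shows
   [c_l(alpha) = - c_r(- alpha)], so only [c_r] needs to be studied; and
   [G lam >= f'(0) + alpha lam + sigma lam^2 / 2 >= (alpha + sqrt (2 sigma f'(0))) lam]
   for [lam > 0] separates the two speeds by [2 sqrt (2 sigma f'(0))]. *)

From Stdlib Require Import Reals Lra.
From Coquelicot Require Import Coquelicot.
From mathcomp Require all_boot ssralg ssrnum.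
From mathcomp Require reals topology normedtype sequences.
From mathcomp Require lebesgue_integral realfun exp trigo derive ftc gauss_integral.
From mathcomp Require Rstruct Rstruct_topology.
Open Scope R_scope.

Definition gauss (t : R) : R := exp (- (t * t)).

Definition gauss_primitive (y : R) : R := RInt gauss 0 y.

Lemma continuous_gauss x : continuous gauss x.
Proof. apply (ex_derive_continuous (V := R_NormedModule)). unfold gauss. auto_derive. easy. Qed.

Lemma is_RInt_gauss a b : is_RInt gauss a b (RInt gauss a b).
Proof.
apply (RInt_correct (V := R_CompleteNormedModule)).
apply (ex_RInt_continuous (V := R_CompleteNormedModule)). intros z _. apply continuous_gauss.
Qed.

Lemma is_derive_gauss_primitive x : is_derive gauss_primitive x (gauss x).
Proof.
apply (is_derive_RInt (V := R_NormedModule) gauss gauss_primitive 0).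
- exists (mkposreal 1 Rlt_0_1). intros y _. apply is_RInt_gauss.
- apply continuous_gauss.
Qed.

Lemma gauss_primitive0 : gauss_primitive 0 = 0.
Proof. exact (RInt_point (V := R_CompleteNormedModule) 0 gauss). Qed.

Lemma gauss_primitive_opp y : gauss_primitive (- y) = - gauss_primitive y.
Proof.
assert (H := is_RInt_gauss (- 0) (- y)).
apply (is_RInt_comp_opp (V := R_NormedModule)) in H.
apply (is_RInt_ext (V := R_NormedModule)) with (g := fun t => - gauss t) in H.
- rewrite Ropp_0 in H. unfold gauss_primitive.
  rewrite <- (is_RInt_unique (V := R_CompleteNormedModule) _ _ _ _ H).
  apply (RInt_opp (V := R_CompleteNormedModule)). eexists. apply is_RInt_gauss.
- intros t _. unfold gauss. cbn. f_equal. f_equal. ring.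
Qed.

Lemma cos_half_eq0 p : 0 < p / 2 < 2 -> cos (p / 2) = 0 -> p = PI.
Proof.
intros Hp Hc. pose proof PI2_3_2.
assert (p / 2 = PI / 2) by (apply cos_inj; try lra; now rewrite Hc, cos_PI2).
lra.
Qed.

Module GaussIntegral.
Import all_boot ssralg ssrnum.
Import reals topology normedtype sequences.
Import lebesgue_integral realfun exp trigo derive ftc gauss_integral Rstruct Rstruct_topology.
Import GRing.Theory Num.Theory numFieldNormedType.Exports.
Local Open Scope classical_set_scope.
Local Open Scope ring_scope.

Local Definition RR : realType := R.

Lemma derive1_of_is_derive (F : RR -> RR) (x l : RR) :
  Coquelicot.Derive.is_derive F x l -> derivable F x 1 /\ F^`() x = l.
Proof.
move=> /is_derive_Reals dF.
have cvgF : (fun h : RR => h^-1 * (F (h + x) - F x)) @ 0^' --> l.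
  apply/cvgrPdist_lt => e /RltP e0.
  have [d Hd] := dF e e0.
  near=> h.
  have h0 : h != 0 by near: h; exact: nbhs_dnbhs_neq.
  have hd : Rlt (Rabs h) d.
    rewrite RabsE; apply/RltP; near: h; apply: dnbhs0_lt; apply/RltP; exact: cond_pos.
  move: (Hd h (elimN eqP h0) hd) => /RltP.
  by rewrite RabsE distrC (addrC h x) mulrC.
have cvgF' : (fun h : RR => h^-1 *: (F (h *: 1 + x) - F x)) @ 0^' --> l.
  apply: cvg_trans cvgF; apply: near_eq_cvg; near=> h.
  by rewrite /= /GRing.scale /= mulr1.
split; first by apply/cvg_ex; exists l; exact: cvgF'.
by rewrite derive1E; exact: cvg_lim cvgF'.
Unshelve. all: end_near.
Qed.

Lemma derive1_gauss_primitive (x : RR) :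
  derivable (gauss_primitive : RR -> RR) x 1 /\ (gauss_primitive : RR -> RR)^`() x = gauss_fun x.
Proof.
have [dP ->] := derive1_of_is_derive _ _ _ (is_derive_gauss_primitive x).
by split=> //; rewrite /gauss_fun /gauss RexpE expr2.
Qed.

Lemma continuous_gauss_primitive : continuous (gauss_primitive : RR -> RR).
Proof.
move=> x; exact/differentiable_continuous/derivable1_diffP/(derive1_gauss_primitive x).1.
Qed.

Lemma integral0_gauss_primitive (b : RR) : 0 < b ->
  gauss_integral_proof.integral0_gauss b = gauss_primitive b.
Proof.
move=> b0; rewrite /gauss_integral_proof.integral0_gauss /Rintegral.
rewrite (@continuous_FTC2 RR gauss_fun gauss_primitive 0 b b0) /=.
- by rewrite gauss_primitive0 subr0.
- exact/continuous_subspaceT/continuous_gauss_fun.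
- split; first by move=> x _; exact: (derive1_gauss_primitive x).1.
  + exact/cvg_at_right_filter/continuous_gauss_primitive.
  + exact/cvg_at_left_filter/continuous_gauss_primitive.
- by move=> x _; rewrite (derive1_gauss_primitive x).2.
Qed.

Lemma RcosE (x : RR) : Rtrigo_def.cos x = cos x.
Proof.
apply/esym; rewrite /Rtrigo_def.cos; case: exist_cos => y.
rewrite /cos_in /infinite_sum => cos_ub.
suff H : series (cos_coeff' x) @ \oo --> y.
  exact: (cvg_unique _ (@cvg_cos_coeff' RR x) H).
rewrite -cvg_shiftS; apply/cvgrPdist_lt => e /RltP /cos_ub[N HN].
near=> n.
have nN : (n >= N)%coq_nat by apply/ssrnat.leP; near: n; exact: nbhs_infty_ge.
move: HN => /(_ _ nN) /[!RdistE] /RltP /=.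
rewrite distrC sum_f_R0E /series /=.
suff -> : \sum_(0 <= k < n.+1) (cos_n k * x² ^ k)%R = \sum_(0 <= k < n.+1) cos_coeff' x k by [].
apply: eq_bigr => k _.
rewrite /cos_n /cos_coeff' RpowE RpowE /Rsqr RdivE factE INRE.
have -> : ((2 * k)%coq_nat) = k.*2 by rewrite -ssrnat.mul2n.
by rewrite RmultE -expr2 -exprM ssrnat.mul2n [RHS]mulrAC.
Unshelve. all: end_near.
Qed.

Lemma piE : pi = PI :> RR.
Proof.
have two : IZR 2 = 2 :> RR by rewrite IZRposE INRE.
have cos_pi2 : Rtrigo_def.cos (Rdiv pi 2) = 0 by rewrite RdivE RcosE two cos_pihalf.
have pi2_bounds : Rlt 0 (Rdiv pi 2) /\ Rlt (Rdiv pi 2) 2.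
  rewrite RdivE two; split; apply/RltP; last exact: pihalf_lt2.
  by rewrite divr_gt0 ?pi_gt0.
exact: cos_half_eq0 pi2_bounds cos_pi2.
Qed.

Lemma cvg_gauss_primitive :
  (gauss_primitive : RR -> RR) x @[x --> +oo] --> Num.sqrt (pi : RR) / 2.
Proof.
have sqr : ((gauss_primitive : RR -> RR) x)^+2 @[x --> +oo] --> (pi : RR) / 4.
  apply: cvg_trans (gauss_integral_proof.cvg_integral0_gauss_sqr (R := RR)).
  by apply: near_eq_cvg; near=> y; rewrite integral0_gauss_primitive.
have : Num.sqrt ((gauss_primitive : RR -> RR) x ^+ 2) @[x --> +oo] --> Num.sqrt ((pi : RR) / 4).
  by apply: continuous_cvg => //; exact: sqrt_continuous.
rewrite sqrtrM ?pi_ge0// sqrtrV// (_ : 4 = 2 ^+ 2) ?sqrtr_sqr ?ger0_norm//; last first.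
  by rewrite expr2 -natrM.
apply: cvg_trans; apply: near_eq_cvg; near=> y.
rewrite sqrtr_sqr ger0_norm // -integral0_gauss_primitive.
  exact: gauss_integral_proof.integral0_gauss_ge0.
near: y; exact: nbhs_pinfty_gt.
Unshelve. all: end_near.
Qed.

Lemma is_lim_of_cvg_pinfty (g : RR -> RR) (l : RR) :
  g x @[x --> +oo] --> l -> is_lim g p_infty l.
Proof.
move=> /cvgrPdist_lt gl; apply/is_lim_spec => eps.
have [M [_ HM]] := gl eps (introT RltP (cond_pos eps)).
by exists M => x /RltP /HM; rewrite distrC RabsE => /RltP.
Qed.

Lemma is_lim_gauss_primitive_pinfty :
  is_lim gauss_primitive p_infty (Rdiv (sqrt PI) (IZR 2)).
Proof.
rewrite RdivE RsqrtE -piE IZRposE INRE.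
exact: is_lim_of_cvg_pinfty cvg_gauss_primitive.
Qed.

End GaussIntegral.

Lemma is_lim_gauss_primitive_minfty : is_lim gauss_primitive m_infty (- (sqrt PI / 2)).
Proof.
apply is_lim_ext with (f := fun y => - gauss_primitive (- y)).
{ intros y. rewrite gauss_primitive_opp. ring. }
apply (is_lim_opp (fun y => gauss_primitive (- y)) m_infty (sqrt PI / 2)).
apply (is_lim_comp gauss_primitive Ropp m_infty (sqrt PI / 2) p_infty).
- exact GaussIntegral.is_lim_gauss_primitive_pinfty.
- apply (is_lim_opp id m_infty m_infty), is_lim_id.
- exists 0. intros x _. discriminate.
Qed.

Lemma is_RInt_gen_gauss_affine a b : 0 < a ->
  is_RInt_gen (fun x => gauss (a * x + b))
    (Rbar_locally m_infty) (Rbar_locally p_infty) (sqrt PI / a).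
Proof.
intros Ha.
set (F x := / a * gauss_primitive (a * x + b)).
assert (dF : forall x, is_derive F x (gauss (a * x + b))).
{ intros x. unfold F.
  replace (gauss (a * x + b)) with (/ a * (a * gauss (a * x + b))) by (field; lra).
  apply (is_derive_scal (fun x => gauss_primitive (a * x + b))).
  apply (is_derive_comp gauss_primitive (fun x => a * x + b)).
  - apply is_derive_gauss_primitive.
  - auto_derive; auto; ring. }
assert (lim_F : forall (y : Rbar) (l : R), y = p_infty \/ y = m_infty ->
          is_lim gauss_primitive y l -> filterlim F (Rbar_locally y) (locally (/ a * l))).
{ intros y l Hy Hl.
  assert (HF : is_lim F y (Rbar_mult (/ a) l)); [|destruct Hy as [-> | ->]; exact HF].
  apply is_lim_scal_l, is_lim_comp_lin; [|lra].
  replace (Rbar_plus (Rbar_mult a y) b) with y; [exact Hl|].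
  destruct Hy as [-> | ->]; simpl; destruct (Rle_dec 0 a) as [H|H]; try lra;
    destruct (Rle_lt_or_eq_dec 0 a H); now try lra. }
replace (sqrt PI / a) with (/ a * (sqrt PI / 2) - / a * (- (sqrt PI / 2))) by (field; lra).
apply (is_RInt_gen_ext (V := R_NormedModule)) with (f := Derive F).
- apply filter_forall. intros ab x _. now apply is_derive_unique.
- apply is_RInt_gen_Derive.
  + apply filter_forall. intros ab x _. eexists. apply dF.
  + apply filter_forall. intros ab x _.
    apply continuous_ext with (f := fun x => gauss (a * x + b)).
    { intros y. symmetry. now apply is_derive_unique. }
    apply (continuous_comp (fun x => a * x + b) gauss).
    * apply (ex_derive_continuous (V := R_NormedModule)). auto_derive. easy.
    * apply continuous_gauss.
  + apply (lim_F m_infty (- (sqrt PI / 2))); [now right | apply is_lim_gauss_primitive_minfty].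
  + apply (lim_F p_infty (sqrt PI / 2)); [now left |].
    apply GaussIntegral.is_lim_gauss_primitive_pinfty.
Qed.

Lemma gauss_kernel_mul_exp alpha sigma lam x : 0 < sigma ->
  gauss_kernel alpha sigma x * exp (lam * x)
  = exp (alpha * lam + sigma * lam ^ 2 / 2) / sqrt (2 * PI * sigma)
    * gauss (/ sqrt (2 * sigma) * x + - (alpha + sigma * lam) / sqrt (2 * sigma)).
Proof.
intros Hs. unfold gauss_kernel, gauss.
set (s := sqrt (2 * sigma)).
assert (Hsq : s * s = 2 * sigma) by (apply sqrt_sqrt; lra).
assert (0 < s) by (apply sqrt_lt_R0; lra).
assert (Hexp : - (x - alpha) ^ 2 / (2 * sigma) + lam * x
  = alpha * lam + sigma * lam ^ 2 / 2
    + - ((/ s * x + - (alpha + sigma * lam) / s) * (/ s * x + - (alpha + sigma * lam) / s))).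
{ clearbody s. replace sigma with (s * s / 2) by lra. field. lra. }
rewrite Rmult_assoc, <- exp_plus, Hexp, exp_plus. unfold Rdiv. ring.
Qed.

Lemma laplace_gauss_kernel alpha sigma lam : 0 < sigma ->
  laplace_k (gauss_kernel alpha sigma) lam = exp (alpha * lam + sigma * lam ^ 2 / 2).
Proof.
intros Hs. unfold laplace_k.
set (s := sqrt (2 * sigma)).
set (C := exp (alpha * lam + sigma * lam ^ 2 / 2) / sqrt (2 * PI * sigma)).
assert (Hsp : 0 < s) by (apply sqrt_lt_R0; lra).
assert (HPI : 0 < sqrt PI) by apply sqrt_lt_R0, PI_RGT_0.
assert (Hnorm : sqrt (2 * PI * sigma) = s * sqrt PI).
{ unfold s. rewrite <- sqrt_mult by (pose proof PI_RGT_0; lra). f_equal. ring. }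
apply (is_RInt_gen_unique (V := R_CompleteNormedModule)).
replace (exp (alpha * lam + sigma * lam ^ 2 / 2)) with (scal C (sqrt PI / / s))
  by (unfold C, scal; simpl; unfold mult; simpl; rewrite Hnorm; field; lra).
apply (is_RInt_gen_ext (V := R_NormedModule))
  with (f := fun x => scal C (gauss (/ s * x + - (alpha + sigma * lam) / s))).
- apply filter_forall. intros ab x _. symmetry. now apply gauss_kernel_mul_exp.
- apply (is_RInt_gen_scal (V := R_NormedModule)), is_RInt_gen_gauss_affine.
  now apply Rinv_0_lt_compat.
Qed.

Lemma c_right_le k d lam : 0 < lam ->
  Rbar_le (c_right k d) ((laplace_k k lam - 1 + d) / lam).
Proof. intros Hl. apply (proj1 (Glb_Rbar_correct _)). now exists lam. Qed.

Lemma c_right_ge k d (m : R) :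
  (forall lam, 0 < lam -> m <= (laplace_k k lam - 1 + d) / lam) ->
  Rbar_le m (c_right k d).
Proof. intros H. apply (proj2 (Glb_Rbar_correct _)). intros y [lam [Hl ->]]. now apply H. Qed.

Lemma c_left_opp k k' d :
  (forall lam, laplace_k k' lam = laplace_k k (- lam)) ->
  c_left k d = Rbar_opp (c_right k' d).
Proof.
intros Hk. apply is_lub_Rbar_unique.
set (speeds_right := fun y => exists lam, 0 < lam /\ y = (laplace_k k' lam - 1 + d) / lam).
apply is_lub_Rbar_eqset with (E1 := fun x => speeds_right (- x)).
- intros x. split.
  + intros [lam [Hl Hx]]. exists (- lam). split; [lra|].
    rewrite Hk, Ropp_involutive, Hx. field. lra.
  + intros [lam [Hl Hx]]. exists (- lam). split; [lra|].
    rewrite Hk in Hx. rewrite <- (Ropp_involutive x), Hx. field. lra.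
- apply (is_lub_Rbar_opp speeds_right), Glb_Rbar_correct.
Qed.

Definition gauss_growth_min (alpha sigma d : R) : R :=
  exp (- (alpha ^ 2 / (2 * sigma))) - 1 + d.

Lemma laplace_gauss_kernel_ge_taylor alpha sigma d lam : 0 < sigma ->
  d + alpha * lam + sigma * lam ^ 2 / 2 <= laplace_k (gauss_kernel alpha sigma) lam - 1 + d.
Proof.
intros Hs. rewrite laplace_gauss_kernel by exact Hs.
pose proof (exp_ineq1_le (alpha * lam + sigma * lam ^ 2 / 2)). lra.
Qed.

Lemma laplace_gauss_exponent_vertex alpha sigma lam : 0 < sigma ->
  alpha * lam + sigma * lam ^ 2 / 2
  = - (alpha ^ 2 / (2 * sigma)) + sigma / 2 * (lam + alpha / sigma) ^ 2.
Proof. intros Hs. field. lra. Qed.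

Lemma laplace_gauss_kernel_ge_min alpha sigma d lam : 0 < sigma ->
  gauss_growth_min alpha sigma d
    + exp (- (alpha ^ 2 / (2 * sigma))) * (sigma / 2) * (lam + alpha / sigma) ^ 2
  <= laplace_k (gauss_kernel alpha sigma) lam - 1 + d.
Proof.
intros Hs. unfold gauss_growth_min.
rewrite laplace_gauss_kernel, laplace_gauss_exponent_vertex, exp_plus by exact Hs.
pose proof (exp_ineq1_le (sigma / 2 * (lam + alpha / sigma) ^ 2)).
pose proof (exp_pos (- (alpha ^ 2 / (2 * sigma)))).
nra.
Qed.

Lemma laplace_gauss_kernel_at_vertex alpha sigma d : 0 < sigma ->
  laplace_k (gauss_kernel alpha sigma) (- alpha / sigma) - 1 + d
  = gauss_growth_min alpha sigma d.
Proof.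
intros Hs. unfold gauss_growth_min.
rewrite laplace_gauss_kernel, laplace_gauss_exponent_vertex by exact Hs.
replace (- alpha / sigma + alpha / sigma) with 0 by (field; lra).
f_equal. f_equal. f_equal. ring.
Qed.

Lemma quadratic_ge_linear (m B lam0 : R) : 0 < m -> 0 < B ->
  exists c, 0 < c /\ forall lam, c * lam <= m + B * (lam - lam0) ^ 2.
Proof.
intros Hm HB.
set (a := (1 / 2 + Rabs lam0) / m).
set (C := a + / (2 * B)).
assert (Ha : 0 < a) by (unfold a; pose proof (Rabs_pos lam0); apply Rdiv_lt_0_compat; lra).
assert (HB' : 0 < / (2 * B)) by (apply Rinv_0_lt_compat; lra).
(* [lam <= |lam0| + |lam - lam0| <= |lam0| + (1 + (lam - lam0)^2) / 2
       <= C (m + B (lam - lam0)^2)] *)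
exists (/ C). split; [apply Rinv_0_lt_compat; unfold C; lra|]. intros lam.
apply Rmult_le_reg_l with C; [unfold C; lra|].
rewrite <- Rmult_assoc, Rinv_r, Rmult_1_l by (unfold C; lra).
set (u := lam - lam0).
assert (Hu : Rabs u <= (1 + u ^ 2) / 2)
  by (pose proof (pow2_ge_0 (u - 1)); pose proof (pow2_ge_0 (u + 1));
      unfold Rabs; destruct (Rcase_abs u); nra).
assert (Hlam : lam <= Rabs lam0 + Rabs u)
  by (pose proof (Rle_abs lam0); pose proof (Rle_abs u); unfold u in *; lra).
assert (HC : C * (m + B * u ^ 2)
             = 1 / 2 + Rabs lam0 + u ^ 2 / 2 + (a * (B * u ^ 2) + / (2 * B) * m))
  by (unfold C, a; field; lra).
rewrite HC.
assert (0 <= a * (B * u ^ 2)) by (pose proof (pow2_ge_0 u); apply Rmult_le_pos; nra).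
assert (0 <= / (2 * B) * m) by nra.
lra.
Qed.

Section GaussianSpeeds.

Variables (alpha sigma d : R).
Hypothesis sigma_gt0 : 0 < sigma.

Lemma c_right_gauss_ge_drift : 0 <= d ->
  Rbar_le (alpha + sqrt (2 * d * sigma)) (c_right (gauss_kernel alpha sigma) d).
Proof.
intros Hd. apply c_right_ge. intros lam Hl.
set (t := sqrt (2 * d * sigma)).
assert (Ht : t * t = 2 * d * sigma) by (apply sqrt_sqrt; nra).
pose proof (laplace_gauss_kernel_ge_taylor alpha sigma d lam sigma_gt0).
apply Rmult_le_reg_r with lam; [exact Hl|].
unfold Rdiv. rewrite Rmult_assoc, Rinv_l, Rmult_1_r by lra.
(* [d + sigma lam^2 / 2 - t lam = (sigma lam - t)^2 / (2 sigma)] *)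
assert (0 <= (sigma * lam - t) ^ 2) by apply pow2_ge_0.
nra.
Qed.

Lemma c_right_gauss_pos : 0 < gauss_growth_min alpha sigma d ->
  Rbar_lt 0 (c_right (gauss_kernel alpha sigma) d).
Proof.
intros Hm.
assert (HB : 0 < exp (- (alpha ^ 2 / (2 * sigma))) * (sigma / 2))
  by (pose proof (exp_pos (- (alpha ^ 2 / (2 * sigma)))); nra).
destruct (quadratic_ge_linear _ _ (- alpha / sigma) Hm HB) as [c [Hc Hlin]].
apply Rbar_lt_le_trans with c; [exact Hc|].
apply c_right_ge. intros lam Hl.
pose proof (laplace_gauss_kernel_ge_min alpha sigma d lam sigma_gt0).
specialize (Hlin lam).
replace (lam - - alpha / sigma) with (lam + alpha / sigma) in Hlin by (field; lra).
apply Rmult_le_reg_r with lam; [exact Hl|].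
unfold Rdiv. rewrite Rmult_assoc, Rinv_l, Rmult_1_r by lra.
lra.
Qed.

Lemma c_right_gauss_ge0 : 0 <= gauss_growth_min alpha sigma d ->
  Rbar_le 0 (c_right (gauss_kernel alpha sigma) d).
Proof.
intros Hm. apply c_right_ge. intros lam Hl.
pose proof (laplace_gauss_kernel_ge_min alpha sigma d lam sigma_gt0).
assert (0 <= exp (- (alpha ^ 2 / (2 * sigma))) * (sigma / 2) * (lam + alpha / sigma) ^ 2).
{ apply Rmult_le_pos; [|apply pow2_ge_0].
  pose proof (exp_pos (- (alpha ^ 2 / (2 * sigma)))). nra. }
apply Rdiv_le_0_compat; [lra | exact Hl].
Qed.

Lemma c_right_gauss_le_vertex : alpha < 0 ->
  Rbar_le (c_right (gauss_kernel alpha sigma) d)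
    (gauss_growth_min alpha sigma d / (- alpha / sigma)).
Proof.
intros Ha. rewrite <- laplace_gauss_kernel_at_vertex by exact sigma_gt0.
apply c_right_le, Rdiv_lt_0_compat; lra.
Qed.

Lemma c_right_gauss_eq0 : alpha < 0 -> gauss_growth_min alpha sigma d = 0 ->
  c_right (gauss_kernel alpha sigma) d = Finite 0.
Proof.
intros Ha Hm. apply Rbar_le_antisym.
- replace (Finite 0) with (Finite (gauss_growth_min alpha sigma d / (- alpha / sigma)))
    by (rewrite Hm; f_equal; unfold Rdiv; ring).
  now apply c_right_gauss_le_vertex.
- apply c_right_gauss_ge0. lra.
Qed.

Lemma c_right_gauss_neg : alpha < 0 -> gauss_growth_min alpha sigma d < 0 ->
  Rbar_lt (c_right (gauss_kernel alpha sigma) d) 0.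
Proof.
intros Ha Hm. eapply Rbar_le_lt_trans; [now apply c_right_gauss_le_vertex|].
simpl. apply Rdiv_neg_pos; [exact Hm|]. apply Rdiv_lt_0_compat; lra.
Qed.

End GaussianSpeeds.

Lemma c_left_gauss alpha sigma d : 0 < sigma ->
  c_left (gauss_kernel alpha sigma) d = Rbar_opp (c_right (gauss_kernel (- alpha) sigma) d).
Proof.
intros Hs. apply c_left_opp. intros lam.
rewrite !laplace_gauss_kernel by exact Hs. f_equal. field.
Qed.

Lemma gauss_growth_min_opp alpha sigma d :
  gauss_growth_min (- alpha) sigma d = gauss_growth_min alpha sigma d.
Proof. unfold gauss_growth_min. do 5 f_equal. ring. Qed.

Lemma c_left_gauss_pos alpha sigma d : 0 < sigma -> 0 < alpha ->
  gauss_growth_min alpha sigma d < 0 -> Rbar_lt 0 (c_left (gauss_kernel alpha sigma) d).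
Proof.
intros Hs Ha Hm. rewrite c_left_gauss by exact Hs.
replace (Finite 0) with (Rbar_opp 0) by (simpl; f_equal; ring).
apply Rbar_opp_lt, c_right_gauss_neg; [exact Hs | lra | now rewrite gauss_growth_min_opp].
Qed.

Lemma c_left_gauss_eq0 alpha sigma d : 0 < sigma -> 0 < alpha ->
  gauss_growth_min alpha sigma d = 0 -> c_left (gauss_kernel alpha sigma) d = Finite 0.
Proof.
intros Hs Ha Hm. rewrite c_left_gauss by exact Hs.
rewrite c_right_gauss_eq0; [simpl; f_equal; ring | exact Hs | lra |].
now rewrite gauss_growth_min_opp.
Qed.

Lemma gauss_speeds_ordered alpha sigma d : 0 < sigma -> 0 < d ->
  Rbar_lt (c_left (gauss_kernel alpha sigma) d) (c_right (gauss_kernel alpha sigma) d).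
Proof.
intros Hs Hd.
set (t := sqrt (2 * d * sigma)).
assert (Ht : 0 < t) by (apply sqrt_lt_R0; nra).
apply Rbar_le_lt_trans with (alpha - t).
- rewrite c_left_gauss by exact Hs.
  replace (Finite (alpha - t)) with (Rbar_opp (- alpha + t)) by (simpl; f_equal; ring).
  apply Rbar_opp_le, c_right_gauss_ge_drift; lra.
- apply Rbar_lt_le_trans with (alpha + t); [simpl; lra|].
  apply c_right_gauss_ge_drift; lra.
Qed.

Lemma gauss_speeds_straddle_zero alpha sigma d :
  0 < sigma -> 0 < gauss_growth_min alpha sigma d ->
  Rbar_lt (c_left (gauss_kernel alpha sigma) d) 0 /\
  Rbar_lt 0 (c_right (gauss_kernel alpha sigma) d).
Proof.
intros Hs Hm. split.
- rewrite c_left_gauss by exact Hs.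
  replace (Finite 0) with (Rbar_opp 0) by (simpl; f_equal; ring).
  apply Rbar_opp_lt, c_right_gauss_pos; [exact Hs | now rewrite gauss_growth_min_opp].
- now apply c_right_gauss_pos.
Qed.

Definition critical_drift (d : R) : R := sqrt (- ln (1 - d)).

Lemma ln_one_minus_neg d : 0 < d < 1 -> ln (1 - d) < 0.
Proof. intros Hd. rewrite <- ln_1. apply ln_increasing; lra. Qed.

Lemma critical_drift_pos d : 0 < d < 1 -> 0 < critical_drift d.
Proof. intros Hd. apply sqrt_lt_R0. pose proof (ln_one_minus_neg d Hd). lra. Qed.

Lemma gauss_growth_min_pos_of_ge1 alpha sigma d : 1 <= d -> 0 < gauss_growth_min alpha sigma d.
Proof.
intros Hd. unfold gauss_growth_min. pose proof (exp_pos (- (alpha ^ 2 / (2 * sigma)))). lra.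
Qed.

Lemma gauss_growth_min_sign alpha sigma d : 0 < sigma -> 0 < d < 1 ->
  let r := alpha / sqrt (2 * sigma) in
  let rho := critical_drift d in
  (r * r < rho * rho -> 0 < gauss_growth_min alpha sigma d) /\
  (r * r = rho * rho -> gauss_growth_min alpha sigma d = 0) /\
  (rho * rho < r * r -> gauss_growth_min alpha sigma d < 0).
Proof.
intros Hs Hd r rho.
pose proof (ln_one_minus_neg d Hd).
assert (Hrho : rho * rho = - ln (1 - d)) by (apply sqrt_sqrt; lra).
assert (Hr : r * r = alpha ^ 2 / (2 * sigma)).
{ unfold r. set (s := sqrt (2 * sigma)).
  assert (Hss : s * s = 2 * sigma) by (apply sqrt_sqrt; lra).
  assert (0 < s) by (apply sqrt_lt_R0; lra).
  rewrite <- Hss. field. lra. }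
assert (Hm : gauss_growth_min alpha sigma d = exp (- (r * r)) - exp (- (rho * rho))).
{ unfold gauss_growth_min. rewrite Hr, Hrho, Ropp_involutive, exp_ln by lra. ring. }
rewrite Hm. repeat split; intros Hcmp.
- assert (exp (- (rho * rho)) < exp (- (r * r))) by (apply exp_increasing; lra). lra.
- rewrite Hcmp. ring.
- assert (exp (- (r * r)) < exp (- (rho * rho))) by (apply exp_increasing; lra). lra.
Qed.

Theorem corollary5p1 :
  exists rstar : R -> R,
  forall (f fp : R -> R) (alpha sigma : R),
    C1_on_01 f fp ->
    f 0 = 0 -> f 1 = 0 ->
    (forall u, 0 < u < 1 -> 0 < f u) ->
    0 < fp 0 ->
    (forall u, 0 < u < 1 -> f u <= fp 0 * u) ->
    0 < sigma ->
    let k := gauss_kernel alpha sigma in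
    let r := alpha / sqrt (2 * sigma) in
    let cl := c_left k (fp 0) in
    let cr := c_right k (fp 0) in
    (1 <= fp 0 -> Rbar_lt cl (Finite 0) /\ Rbar_lt (Finite 0) cr)
    /\
    (fp 0 < 1 ->
       0 < rstar (fp 0)
       /\ (rstar (fp 0) < r -> Rbar_lt (Finite 0) cl /\ Rbar_lt cl cr)
       /\ (r = rstar (fp 0) -> cl = Finite 0 /\ Rbar_lt cl cr)
       /\ (- rstar (fp 0) < r < rstar (fp 0) ->
             Rbar_lt cl (Finite 0) /\ Rbar_lt (Finite 0) cr)
       /\ (r = - rstar (fp 0) -> Rbar_lt cl cr /\ cr = Finite 0)
       /\ (r < - rstar (fp 0) -> Rbar_lt cl cr /\ Rbar_lt cr (Finite 0))).
Proof.
exists critical_drift.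
(* The speeds depend on [f] only through [f'(0)]. *)
intros f fp alpha sigma _ _ _ _ Hd _ Hs. cbv zeta.
set (d := fp 0) in *.
split.
{ intros Hd1. now apply gauss_speeds_straddle_zero, gauss_growth_min_pos_of_ge1. }
intros Hd1. assert (Hd01 : 0 < d < 1) by lra.
destruct (gauss_growth_min_sign alpha sigma d Hs Hd01) as [Mpos [Mzero Mneg]].
set (r := alpha / sqrt (2 * sigma)) in *.
set (rho := critical_drift d) in *.
assert (Hrho : 0 < rho) by now apply critical_drift_pos.
assert (Hsq : 0 < sqrt (2 * sigma)) by (apply sqrt_lt_R0; lra).
assert (Halpha : alpha = r * sqrt (2 * sigma)) by (unfold r; field; lra).
pose proof (gauss_speeds_ordered alpha sigma d Hs Hd) as Hlt.
split; [exact Hrho |].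
split; [| split; [| split; [| split]]]; intros Hr.
- split; [apply c_left_gauss_pos; [exact Hs | nra | apply Mneg; nra] | exact Hlt].
- split; [apply c_left_gauss_eq0; [exact Hs | nra | apply Mzero; now rewrite Hr] | exact Hlt].
- apply gauss_speeds_straddle_zero; [exact Hs | apply Mpos; nra].
- split; [exact Hlt | apply c_right_gauss_eq0; [exact Hs | nra | apply Mzero; rewrite Hr; ring]].
- split; [exact Hlt | apply c_right_gauss_neg; [exact Hs | nra | apply Mneg; nra]].
Qed.
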